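(* Let $A$ be a finite alphabet and let $w \in A^{+}$ with $|w| \leq 3$. Then for every integer $k \geq 0$ the language $\mathrm{Count}(w,k)$ has generalised star-height $0$, and for every integer $n \geq 2$ and every integer $k$ with $0 \leq k < n$ the language $\mathrm{ModCount}(w,k,n)$ has generalised star-height at most $1$.
   Context: Let $A$ be a finite non-empty alphabet, $A^{\ast}$ the set of all words over $A$ (including the empty word $\varepsilon$), $A^{+}=A^{\ast}\setminus\{\varepsilon\}$, and $|w|$ the length of $w$. Generalised regular expressions over $A$: $\emptyset$, $\varepsilon$ and each letter $a\in A$ are expressions; if $E,F$ are expressions then so are $E\cup F$, $EF$, $E^{\ast}$ and $E^{c}$ (complement in $A^{\ast}$). The star-height $h$ of an expression is defined by $h(\emptyset)=h(\varepsilon)=h(a)=0$, $h(E\cup F)=h(EF)=\max\{h(E),h(F)\}$, $h(E^{\ast})=h(E)+1$, $h(E^{c})=h(E)$. The (generalised) star-height of a language $L\subseteq A^{\ast}$ is the minimum of $h(E)$ over all generalised regular expressions $E$ representing $L$. For $w\in A^{+}$ and $v\in A^{\ast}$, $|v|_{w}$ denotes the number of occurrences of $w$ as a contiguous subword (factor) of $v$, i.e. the number of factorisations $v=xwy$ with $x,y\in A^{\ast}$ (overlapping occurrences are counted separately; e.g. $|abababa|_{aba}=3$). For an integer $k\ge 0$, $\mathrm{Count}(w,k)=\{v\in A^{\ast} : |v|_{w}=k\}$; for integers $n\geq 2$ and $0\le k<n$, $\mathrm{ModCount}(w,k,n)=\{v\in A^{\ast} : |v|_{w}\equiv k \pmod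 n\}$. *)

From mathcomp Require Import all_boot.
Set Implicit Arguments. Unset Strict Implicit. Unset Printing Implicit Defensive.

Inductive gre (A : Type) : Type :=
| GEmpty : gre A
| GEps : gre A
| GLetter : A -> gre A
| GUnion : gre A -> gre A -> gre A
| GConc : gre A -> gre A -> gre A
| GStar : gre A -> gre A
| GCompl : gre A -> gre A.

Definition language (A : Type) := seq A -> Prop.

Fixpoint gre_lang (A : Type) (E : gre A) : language A :=
  match E with
  | GEmpty => fun _ => False
  | GEps => fun u => u = [::]
  | GLetter a => fun u => u = [:: a]
  | GUnion E F => fun u => gre_lang E u \/ gre_lang F u
  | GConc E F => fun u => exists x y, u = x ++ y /\ gre_lang E x /\ gre_lang F y
  | GStar E => fun u => exists ws : seq (seq A),
                 u = flatten ws /\ (forall i, i < size ws -> gre_lang E (nth [::] ws i))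
  | GCompl E => fun u => ~ gre_lang E u
  end.

Fixpoint star_height (A : Type) (E : gre A) : nat :=
  match E with
  | GEmpty | GEps | GLetter _ => 0
  | GUnion E F | GConc E F => maxn (star_height E) (star_height F)
  | GStar E => (star_height E).+1
  | GCompl E => star_height E
  end.

Definition represents (A : Type) (E : gre A) (L : language A) : Prop :=
  forall u, gre_lang E u <-> L u.

Definition gen_star_height_le (A : Type) (L : language A) (h : nat) : Prop :=
  exists E : gre A, represents E L /\ star_height E <= h.

Definition gen_star_height_eq (A : Type) (L : language A) (h : nat) : Prop :=
  gen_star_height_le L h /\ forall h', h' < h -> ~ gen_star_height_le L h'.

(* |v|_w : number of factorisations v = x w y. *)
Definition occ (A : eqType) (w v : seq A) : nat :=
  count (fun i => take (size w) (drop i v) == w) (iota 0 (size v).+1).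

Definition Count (A : eqType) (w : seq A) (k : nat) : language A :=
  fun v => occ w v = k.

Definition ModCount (A : eqType) (w : seq A) (k n : nat) : language A :=
  fun v => occ w v %% n = k.

(* Occurrence counting is star-free: "at least k+1 occurrences" means that some
   suffix starts with [w] and, after its first letter, still has at least k
   occurrences, and complement gives intersection.  For the modular count, cut a
   word containing [w] at its 1st, (n+1)-th, (2n+1)-th, ... occurrence of [w]:
   it becomes x b_1 ... b_j y where x w has a single occurrence, each block b_i
   starts with [w] and b_i w has exactly n+1 occurrences, and y starts with [w]
   and has between 1 and n occurrences.  An occurrence starting in a factor only
   sees the next |w| letters, so each of these conditions is a star-free language
   taken after a right quotient by [w]; star-free languages are closed under
   right quotients, and a single star over the blocks suffices. *)

From mathcomp Require Import all_boot zify.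
From Stdlib Require Import Classical.
Set Implicit Arguments. Unset Strict Implicit. Unset Printing Implicit Defensive.

Section Occurrences.

Variables (A : eqType) (w : seq A).
Implicit Types (b u v x y z : seq A) (bs : seq (seq A)).

Lemma occ_cons a z : occ w (a :: z) = prefix w (a :: z) + occ w z.
Proof.
rewrite /occ (iotaD 0 1) count_cat [count _ (iota 0 1)]/= addn0 -prefixE.
by rewrite (iotaDl 1 0) count_map.
Qed.

Lemma occ_short z : size z < size w -> occ w z = 0.
Proof.
elim: z => [|a z IH] hz; first by rewrite /occ /=; case: w hz.
rewrite occ_cons IH ?(ltn_trans _ hz) // addn0.
by case: prefixP => // -[s e]; rewrite e size_cat ltnNge leq_addr in hz.
Qed.

Lemma occ_suffix x y : occ w y <= occ w (x ++ y).
Proof. by elim: x => //= a x IH; rewrite occ_cons (leq_trans IH) ?leq_addl. Qed.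

Lemma prefix_cat_prefix x y : prefix w y -> prefix w (x ++ y) = prefix w (x ++ w).
Proof.
by case/prefixP=> z ->; rewrite catA !prefixE takel_cat // size_cat leq_addl.
Qed.

Hypothesis w_gt0 : 0 < size w.

Lemma occ_self : occ w w = 1.
Proof.
have [a [w' ew]] : exists a w', w = a :: w' by case: w w_gt0 => // a w'; exists a, w'.
by rewrite {2}ew occ_cons -ew prefix_refl occ_short // ew.
Qed.

(* Occurrences starting in [x] only see the first [size w] letters of [y]. *)
Lemma occ_cat_prefix x y : prefix w y -> occ w (x ++ y) + 1 = occ w (x ++ w) + occ w y.
Proof.
move=> hy; elim: x => [|a x IH]; first by rewrite occ_self addnC.
by rewrite !occ_cons (prefix_cat_prefix (a :: x) hy) -addnA IH addnA.
Qed.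

Lemma occ_split k v : k < occ w v ->
  exists b y, [/\ v = b ++ y, prefix w y & occ w (b ++ w) = k.+1].
Proof.
elim: v k => [|a z IH] k; first by rewrite occ_short.
have cons_occ b y : z = b ++ y -> prefix w y ->
    occ w ((a :: b) ++ w) = prefix w (a :: z) + occ w (b ++ w).
  by move=> -> hy; rewrite occ_cons -(prefix_cat_prefix (a :: b) hy).
rewrite occ_cons; case hp: (prefix w (a :: z)) => hk.
  case: k hk => [_|k]; first by exists [::], (a :: z); rewrite occ_self.
  rewrite add1n ltnS => hk.
  have [b [y [ez hy hb]]] := IH k hk.
  by exists (a :: b), y; rewrite (cons_occ b y) // hp hb ez.
have [b [y [ez hy hb]]] := IH k (hk : k < 0 + occ w z).
by exists (a :: b), y; rewrite (cons_occ b y) // hp hb ez.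
Qed.

Lemma occ_first v : 0 < occ w v ->
  exists x y, [/\ v = x ++ y, prefix w y, occ w (x ++ w) = 1 & occ w y = occ w v].
Proof.
move=> /occ_split[x [y [ev hy hx]]]; exists x, y; split => //.
by have := occ_cat_prefix x hy; rewrite -ev hx; lia.
Qed.

Variable n : nat.

(* A block is a factor running from one occurrence of [w] to just before the
   [n+1]-th occurrence counted from it. *)
Definition occ_block b := prefix w (b ++ w) && (occ w (b ++ w) == n.+1).

Lemma occ_flatten_blocks bs z : all occ_block bs -> prefix w z ->
  prefix w (flatten bs ++ z) /\ occ w (flatten bs ++ z) = size bs * n + occ w z.
Proof.
elim: bs => [|b bs IH] //= /andP[/andP[hbp /eqP hbo] hbs] hz.
have [hp ho] := IH hbs hz.
rewrite -catA prefix_cat_prefix // hbp; split => //.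
by have := occ_cat_prefix b hp; rewrite hbo ho mulSn; lia.
Qed.

Lemma occ_split_blocks j t y : 0 < t -> prefix w y -> occ w y = j * n + t ->
  exists bs z, [/\ y = flatten bs ++ z, all occ_block bs, prefix w z & occ w z = t].
Proof.
move=> t_gt0; elim: j y => [|j IH] y hy hocc; first by exists [::], y.
have [b [y' [ey hy' hb]]] : exists b y', [/\ y = b ++ y', prefix w y' & occ w (b ++ w) = n.+1].
  by apply: occ_split; rewrite hocc mulSn; lia.
have hy'o : occ w y' = j * n + t.
  by have := occ_cat_prefix b hy'; rewrite -ey hb hocc mulSn; lia.
have [bs [z [ey' hbs hz hzo]]] := IH y' hy' hy'o.
exists (b :: bs), z; split => //; first by rewrite ey ey' catA.
by rewrite /= hbs andbT /occ_block -(prefix_cat_prefix b hy') -ey hy hb eqxx.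
Qed.

Lemma occ_mod_blocksP t u : 0 < t <= n ->
  (0 < occ w u /\ occ w u = t %[mod n]) <->
  exists x bs y, [/\ u = x ++ flatten bs ++ y, occ w (x ++ w) = 1,
                     all occ_block bs, prefix w y & occ w y = t].
Proof.
case/andP=> t_gt0 tn; split.
  case=> pos hmod.
  have [x [y [eu hy hx hyo]]] := occ_first pos.
  have t_le : t <= occ w u.
    move: tn; rewrite leq_eqVlt => /orP[/eqP tn|tn]; last first.
      by rewrite -(modn_small tn) -hmod leq_mod.
    by rewrite tn dvdn_leq //; apply/eqP; rewrite hmod -tn modnn.
  have /divnK hj : n %| occ w u - t by rewrite -eqn_mod_dvd // hmod.
  have [|bs [z [ey hbs hz hzo]]] := @occ_split_blocks ((occ w u - t) %/ n) t y t_gt0 hy.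
    by rewrite hj hyo subnK.
  by exists x, bs, z; rewrite eu ey.
case=> x [bs [y [-> hx hbs hy hyt]]].
have [hp ho] := occ_flatten_blocks hbs hy.
have := occ_cat_prefix x hp; rewrite hx ho hyt => e.
have -> : occ w (x ++ flatten bs ++ y) = size bs * n + t by lia.
by split; [lia | exact: modnMDl].
Qed.

End Occurrences.

Section RightDerivative.

Variable A : eqType.
Implicit Types (E F : gre A) (u : seq A).

Fixpoint nullable E : bool :=
  match E with
  | GEmpty | GLetter _ => false
  | GEps | GStar _ => true
  | GUnion E F => nullable E || nullable F
  | GConc E F => nullable E && nullable F
  | GCompl E => ~~ nullable E
  end.

Lemma nullableP E : reflect (gre_lang E [::]) (nullable E).
Proof.
elim: E => /= [||a|E hE F hF|E hE F hF|E _|E hE]; try by constructor.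
- by apply: (iffP orP) => -[/hE|/hF]; by [left|right].
- apply: (iffP andP) => [[/hE hx /hF hy]|[x [y [e [hx hy]]]]].
    by exists [::], [::].
  by case: x y e hx hy => [|//] [|//] _ /hE -> /hF.
- by constructor; exists [::].
- by apply: (iffP negP) => nh h; apply: nh; apply/hE.
Qed.

Fixpoint gre_rder (a : A) E : gre A :=
  match E with
  | GEmpty | GEps => GEmpty _
  | GLetter b => if a == b then GEps _ else GEmpty _
  | GUnion E F => GUnion (gre_rder a E) (gre_rder a F)
  | GConc E F =>
      GUnion (GConc E (gre_rder a F)) (if nullable F then gre_rder a E else GEmpty _)
  | GStar E => GConc (GStar E) (gre_rder a E)
  | GCompl E => GCompl (gre_rder a E)
  end.

Lemma forall_nth_rcons (T : Type) (x0 : T) (P : T -> Prop) s x :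
  (forall i, i < size (rcons s x) -> P (nth x0 (rcons s x) i)) <->
  (forall i, i < size s -> P (nth x0 s i)) /\ P x.
Proof.
rewrite size_rcons; split=> [h|[h hx] i].
  split=> [i hi|]; first by have := h i (leqW hi); rewrite nth_rcons hi.
  by have := h (size s) (ltnSn _); rewrite nth_rcons ltnn eqxx.
rewrite ltnS leq_eqVlt => /orP[/eqP->|hi]; rewrite nth_rcons ?ltnn ?eqxx //.
by rewrite hi; apply: h.
Qed.

Lemma gre_rderP a E u : gre_lang (gre_rder a E) u <-> gre_lang E (rcons u a).
Proof.
elim: E u => /= [||b|E hE F hF|E hE F hF|E hE|E hE] u.
- by [].
- by split=> //; case: u.
- case: eqP => [<-|nab]; first by case: u => [|c []].
  by split=> //; case: u => [[/nab]|c []].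
- by rewrite hE hF.
- split.
    case=> [[x [y [-> [hx /hF hy]]]]|].
      by exists x, (rcons y a); rewrite rcons_cat.
    case: (nullableP F) => // hF0 /hE hu.
    by exists (rcons u a), [::]; rewrite cats0.
  case=> x [y [e [hx hy]]]; case/lastP: y e hy => [|y b] e hy.
    right; move: e hx; rewrite cats0 => <- hx.
    by case: nullableP => [_|/(_ hy)//]; apply/hE.
  move: e; rewrite -rcons_cat => /rcons_inj[-> eab].
  by left; exists x, y; split=> //; split=> //; apply/hF; rewrite eab.
- split.
    case=> x [y [-> [[ws [-> hws]] /hE hy]]].
    exists (rcons ws (rcons y a)); rewrite flatten_rcons rcons_cat.
    by split=> //; apply/forall_nth_rcons.
  case=> ws []; elim/last_ind: ws => [|ws b IH]; first by case: u.
  rewrite flatten_rcons => e /forall_nth_rcons[hws hb].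
  case/lastP: b e hb => [|c a'] e hb; first by apply: IH => //; rewrite e cats0.
  move: e hb; rewrite -rcons_cat => /rcons_inj[-> <-] hb.
  by exists (flatten ws), c; split=> //; split; [exists ws | apply/hE].
- by rewrite hE.
Qed.

Lemma star_height_rder a E : star_height (gre_rder a E) <= star_height E.
Proof.
elim: E => //= [b|E hE F hF|E hE F hF|E hE]; try by case: ifP.
- by rewrite geq_max !leq_max hE hF orbT.
- by case: ifP; rewrite /= !geq_max !leq_max ?hF ?hE ?leqnn ?orbT.
- by rewrite geq_max leqnn (leq_trans hE).
Qed.

Fixpoint gre_rquot (s : seq A) E : gre A :=
  if s is a :: s' then gre_rder a (gre_rquot s' E) else E.

Lemma gre_rquotP s E u : gre_lang (gre_rquot s E) u <-> gre_lang E (u ++ s).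
Proof.
by elim: s u => [|a s IH] u /=; rewrite ?cats0 // gre_rderP IH cat_rcons.
Qed.

Lemma star_height_rquot s E : star_height (gre_rquot s E) <= star_height E.
Proof. by elim: s => //= a s IH; apply: leq_trans (star_height_rder _ _) IH. Qed.

End RightDerivative.

Section Constructions.

Variable A : eqType.
Implicit Types (E F : gre A) (s u v : seq A).

Definition gre_univ : gre A := GCompl (GEmpty A).

Definition gre_inter E F := GCompl (GUnion (GCompl E) (GCompl F)).

Lemma gre_interP E F u : gre_lang (gre_inter E F) u <-> gre_lang E u /\ gre_lang F u.
Proof.
split=> [h|[hE hF] [] //]; split; apply: NNPP => h'; apply: h; by [left|right].
Qed.

Lemma star_height_inter E F :
  star_height (gre_inter E F) = maxn (star_height E) (star_height F).
Proof. by []. Qed.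

Fixpoint gre_word s : gre A :=
  if s is a :: s' then GConc (GLetter a) (gre_word s') else GEps A.

Lemma gre_wordP s u : gre_lang (gre_word s) u <-> u = s.
Proof.
elim: s u => [|a s IH] u //=; split=> [[x [y [-> [-> /IH ->]]]] //|->].
by exists [:: a], s; split=> //; split=> //; apply/IH.
Qed.

Lemma star_height_word s : star_height (gre_word s) = 0.
Proof. by elim: s => //= a s ->. Qed.

Definition gre_prefix s := GConc (gre_word s) gre_univ.

Lemma gre_prefixP s u : gre_lang (gre_prefix s) u <-> prefix s u.
Proof.
split=> [[x [y [-> [/gre_wordP -> _]]]]|/prefixP[y ->]]; first exact: prefix_prefix.
by exists s, y; split=> //; split=> //; apply/gre_wordP.
Qed.

Lemma star_height_prefix s : star_height (gre_prefix s) = 0.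
Proof. by rewrite /= star_height_word. Qed.

End Constructions.

(* Sealed so that [simpl] leaves them folded in later goals. *)
Opaque gre_inter gre_prefix.

Section StarFreeCounting.

Variables (A : eqType) (w : seq A).
Hypothesis w_gt0 : 0 < size w.

(* [k.+1 <= occ w v] iff some suffix of [v] starts with [w] and has at least
   [k] occurrences after its first letter. *)
Fixpoint gre_occ_ge k : gre A :=
  if k is k'.+1 then
    GConc (gre_univ A) (gre_inter (gre_prefix w) (GConc (GCompl (GEps A)) (gre_occ_ge k')))
  else gre_univ A.

Lemma gre_occ_geP k v : reflect (gre_lang (gre_occ_ge k) v) (k <= occ w v).
Proof.
elim: k v => [|k IH] v; first by apply: (iffP idP) => // _ [].
apply: (iffP idP) => [hk|].
  have [x [y [ev hy _ hyo]]] := occ_first w_gt0 (leq_ltn_trans (leq0n k) hk).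
  case: y ev hy hyo => [|a y] ev hy hyo; first by rewrite prefixs0 -size_eq0 eqn0Ngt w_gt0 in hy.
  exists x, (a :: y); split=> //; split=> //; apply/gre_interP; split; first exact/gre_prefixP.
  exists [:: a], y; split=> //; split=> //; apply/IH.
  by move: hk; rewrite -hyo occ_cons hy.
move=> /= -[x [y [-> [_ /gre_interP[/gre_prefixP hy [c [y' [ey [hc /IH hk]]]]]]]]].
apply: leq_trans (occ_suffix w x y); case: c ey hc => [//|a c] ey _.
by move: hy; rewrite ey occ_cons => ->; rewrite add1n ltnS (leq_trans hk) ?occ_suffix.
Qed.

Lemma star_height_occ_ge k : star_height (gre_occ_ge k) = 0.
Proof. by elim: k => //= k IH; rewrite star_height_inter star_height_prefix /= IH. Qed.

Definition gre_count k := gre_inter (gre_occ_ge k) (GCompl (gre_occ_ge k.+1)).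

Lemma gre_countP k v : gre_lang (gre_count k) v <-> occ w v = k.
Proof.
split=> [/gre_interP[/gre_occ_geP h1 h2]|hv].
  by apply/eqP; rewrite eqn_leq h1 andbT leqNgt; apply/negP => /gre_occ_geP.
apply/gre_interP; split; first by apply/gre_occ_geP; rewrite hv.
by change (~ gre_lang (gre_occ_ge k.+1) v) => /gre_occ_geP; rewrite hv ltnn.
Qed.

Lemma star_height_count k : star_height (gre_count k) = 0.
Proof.
rewrite star_height_inter -[star_height (GCompl _)]/(star_height (gre_occ_ge k.+1)).
by rewrite !star_height_occ_ge.
Qed.

End StarFreeCounting.

Opaque gre_count.

Lemma gre_starP (A : Type) (E : gre A) (P : pred (seq A)) u :
  (forall v, gre_lang E v <-> P v) ->
  gre_lang (GStar E) u <-> exists2 bs, u = flatten bs & all P bs.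
Proof.
move=> EP; split=> [[bs [-> hbs]]|[bs -> /all_nthP hbs]]; exists bs => //.
  by apply/(all_nthP [::]) => i /hbs /EP.
by split=> // i /(hbs [::]) /EP.
Qed.

Section ModularCounting.

Variables (A : eqType) (w : seq A) (n k : nat).
Hypotheses (w_gt0 : 0 < size w) (k_lt_n : k < n).

(* The positive representative of the residue class of [k] modulo [n]. *)
Let t := if k is 0 then n else k.

Definition gre_modcount : gre A :=
  GUnion (if k is 0 then gre_count w 0 else GEmpty A)
    (GConc (gre_rquot w (gre_count w 1))
       (GConc (GStar (gre_rquot w (gre_inter (gre_prefix w) (gre_count w n.+1))))
          (gre_inter (gre_prefix w) (gre_count w t)))).

Lemma star_height_modcount : star_height gre_modcount <= 1.
Proof.
have sh0 s E : star_height E = 0 -> star_height (gre_rquot s E) = 0.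
  by move=> hE; apply/eqP; rewrite -leqn0 -hE star_height_rquot.
have sh_tail m : star_height (gre_inter (gre_prefix w) (gre_count w m)) = 0.
  by rewrite star_height_inter star_height_prefix star_height_count.
rewrite /= !sh0 ?sh_tail ?star_height_count //.
by case: (k) => [|k'] /=; rewrite ?star_height_count.
Qed.

Lemma gre_modcountP u : gre_lang gre_modcount u <-> occ w u %% n = k.
Proof.
have t_range : 0 < t <= n by rewrite /t; case: (k) k_lt_n; lia.
have t_mod : t %% n = k by rewrite /t; case: (k) k_lt_n => [|k'] hk; rewrite ?modnn ?modn_small.
have U_P x : gre_lang (gre_rquot w (gre_count w 1)) x <-> occ w (x ++ w) = 1.
  by rewrite gre_rquotP gre_countP.
have K_P b : gre_lang (gre_rquot w (gre_inter (gre_prefix w) (gre_count w n.+1))) b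
    <-> occ_block w n b.
  rewrite gre_rquotP gre_interP gre_prefixP gre_countP // /occ_block.
  by split=> [[-> ->]|/andP[-> /eqP ->]]; rewrite ?eqxx.
have T_P y : gre_lang (gre_inter (gre_prefix w) (gre_count w t)) y <-> prefix w y /\ occ w y = t.
  by rewrite gre_interP gre_prefixP gre_countP.
have Z_P : gre_lang (if k is 0 then gre_count w 0 else GEmpty A) u <-> occ w u = 0 /\ k = 0.
  by case: (k) => [|k'] /=; rewrite ?gre_countP //; split=> // -[].
rewrite /gre_modcount /= Z_P; split.
  case=> [[-> ->]|[x [r [-> [/U_P hx [s [y [-> [hs /T_P[hy hyt]]]]]]]]]]; first exact: mod0n.
  have [bs -> hbs] := (gre_starP _ K_P).1 hs.
  suff [_ ->] : 0 < occ w (x ++ flatten bs ++ y) /\ occ w (x ++ flatten bs ++ y) = t %[mod n].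
    exact: t_mod.
  by apply/(occ_mod_blocksP w_gt0 _ t_range); exists x, bs, y.
have [occ0|pos] := posnP (occ w u); first by rewrite occ0 mod0n => <-; left.
rewrite -t_mod => /(conj pos)/(occ_mod_blocksP w_gt0 _ t_range)[x [bs [y [-> hx hbs hy hyt]]]].
right; exists x, (flatten bs ++ y); split=> //; split; first exact/U_P.
exists (flatten bs), y; split=> //; split; last exact/T_P.
by apply/(gre_starP _ K_P); exists bs.
Qed.

End ModularCounting.

Theorem mainTheorem1 (A : finType) (w : seq A) :
  0 < size w -> size w <= 3 ->
  (forall k : nat, gen_star_height_eq (Count w k) 0) /\
  (forall n k : nat, 2 <= n -> k < n -> gen_star_height_le (ModCount w k n) 1).
Proof.
move=> w_gt0 _; split=> [k | n k _ k_lt_n].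
  split=> [|h]; last by rewrite ltn0.
  by exists (gre_count w k); rewrite star_height_count; split=> // u; apply: gre_countP.
exists (gre_modcount w n k); split; last exact: star_height_modcount.
by move=> u; apply: gre_modcountP.
Qed.
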